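(* Let $f\in\mathbb{Q}[x_1,\dots,x_n]$ be a convex polynomial and $P=\{x\in\mathbb{R}^n:Ax\le b\}$ a nonempty polyhedron ($A\in\mathbb{Q}^{m\times n}$, $b\in\mathbb{Q}^m$). Suppose $\mathcal{U}\subseteq\mathbb{R}^n$ is a linear subspace, $U\in\mathbb{Q}^{k\times n}$ has pairwise orthogonal rows spanning $\mathcal{U}$, $w\in\mathcal{U}^\perp$ is a rational vector, and $q\in\mathbb{Q}[y_1,\dots,y_k]$ is a strongly convex quadratic polynomial, such that $f(x)=f(x_{\mathcal{U}})-\langle w,x\rangle$ and $f(x_{\mathcal{U}})\ge q(Ux)$ for all $x\in\mathbb{R}^n$. Then $f$ is unbounded from below on $P$ if and only if there exists $x^0\in\mathbb{R}^n$ with $Ax^0\le0$, $Ux^0=0$ (equivalently $x^0\in\mathcal{U}^\perp$) and $\langle w,x^0\rangle=1$.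
   Context: $x_{\mathcal{U}}$ denotes the orthogonal projection of $x$ onto $\mathcal{U}$. A quadratic $q$ is strongly convex if its (constant) Hessian is positive definite. Such $\mathcal{U},U,w,q$ always exist for convex rational $f$. *)

From HB Require Import structures.
From mathcomp Require Import all_boot all_order all_algebra.
From mathcomp Require Import reals.
From mathcomp Require Import mpoly.
Set Implicit Arguments. Unset Strict Implicit. Unset Printing Implicit Defensive.
Import Order.TTheory GRing.Theory Num.Theory.
Local Open Scope ring_scope.

(* Vectors of R^n are column vectors 'cV[R]_n; variable x_i <-> x i 0. *)

Definition peval (R : realType) (n : nat) (p : {mpoly rat[n]}) (x : 'cV[R]_n) : R :=
  (map_mpoly (ratr : rat -> R) p).@[fun i => x i 0].

Definition ratmx (R : realType) (m n : nat) (A : 'M[rat]_(m, n)) : 'M[R]_(m, n) :=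
  map_mx (ratr : rat -> R) A.

Definition dotv (R : realType) (n : nat) (u v : 'cV[R]_n) : R :=
  \sum_(i < n) u i 0 * v i 0.

Definition lev (R : realType) (m : nat) (u v : 'cV[R]_m) : Prop :=
  forall i, u i 0 <= v i 0.

Definition convex_poly (R : realType) (n : nat) (p : {mpoly rat[n]}) : Prop :=
  forall (x y : 'cV[R]_n) (t : R), 0 <= t <= 1 ->
    peval p (t *: x + (1 - t) *: y) <= t * peval p x + (1 - t) * peval p y.

Definition hessian (R : realType) (k : nat) (q : {mpoly rat[k]}) (y : 'cV[R]_k)
  : 'M[R]_k :=
  \matrix_(i, j) peval ((q^`M(i))^`M(j)) y.

(* q is a quadratic polynomial (total degree <= 2) whose constant Hessian is
   positive definite. *)
Definition strongly_convex_quadratic (R : realType) (k : nat) (q : {mpoly rat[k]}) : Prop :=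
  (msize q <= 3)%N /\
  forall y0 y : 'cV[R]_k, y != 0 -> 0 < (y^T *m hessian q y0 *m y) 0 0.

(* The orthogonal projection x_U of x onto the subspace spanned by the rows of B
   (as row vectors): projection onto <<B>> along its orthogonal complement
   kermx B^T = { v | v *m B^T = 0 }. *)
Definition orth_proj (R : realType) (k n : nat) (B : 'M[R]_(k, n)) (x : 'cV[R]_n)
  : 'cV[R]_n :=
  (x^T *m proj_mx (<<B>>)%MS (kermx B^T))^T.

From HB Require Import structures.
From mathcomp Require Import all_boot all_order all_algebra.
From mathcomp Require Import reals.
From mathcomp Require Import mpoly.
From mathcomp.algebra_tactics Require Import ring lra.
Set Implicit Arguments.
Unset Strict Implicit.
Unset Printing Implicit Defensive.
Import Order.TTheory GRing.Theory Num.Theory.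
Local Open Scope ring_scope.

(* If some x0 with A x0 <= 0, U x0 = 0 and <w, x0> = 1 exists, moving from a
   point of P along x0 leaves the projection onto the row space of U fixed, so
   f decreases by exactly t along the ray.  Otherwise Farkas' lemma (proved by
   Fourier-Motzkin elimination) writes w = A^T y + U^T z with y >= 0, so on P
   <w, x> <= <y, b> + <z, U x> and f x >= q (U x) - <z, U x> - <y, b>.  A
   strongly convex quadratic minus a linear form is bounded below: it equals
   its second-order Taylor expansion, and completing the square with the
   positive definite Hessian gives the bound. *)

Section Farkas.
Variable R : realFieldType.

Lemma sum_delta (T : finType) (i : T) (g : T -> R) : \sum_t (i == t)%:R * g t = g i.
Proof.
rewrite (bigD1 i) //= eqxx mul1r big1 ?addr0 // => t; rewrite eq_sym => /negbTE ->.
exact: mul0r.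
Qed.

Section FourierMotzkin.
Variables (T : finType) (alpha : T -> R).

(* The Fourier-Motzkin combinations eliminating the coordinate with
   coefficients [alpha]; indices of neither admissible shape give [0]. *)
Definition fm_comb (s : T + T * T) (g : T -> R) : R :=
  match s with
  | inl i => if alpha i == 0 then g i else 0
  | inr (i, j) => if (0 < alpha i) && (alpha j < 0)
                  then - alpha j * g i + alpha i * g j else 0
  end.

Definition fm_weight s t : R := fm_comb s (fun u => (u == t)%:R).

Lemma fm_comb_alpha s : fm_comb s alpha = 0.
Proof.
case: s => [i|[i j]] /=; case: ifP => [|//]; first by move/eqP.
move=> _; ring.
Qed.

Lemma fm_weight_ge0 s t : 0 <= fm_weight s t.
Proof.
case: s => [i|[i j]] /=; first by case: ifP; rewrite ?ler0n.
case: ifPn => // /andP [ai aj].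
by rewrite addr_ge0 ?mulr_ge0 ?oppr_ge0 ?ler0n ?ltW.
Qed.

Lemma sum_fm_weight s g : \sum_t fm_weight s t * g t = fm_comb s g.
Proof.
case: s => [i|[i j]] /=; case: ifP => _; rewrite ?sum_delta //;
  try by rewrite big1 // => t _; rewrite mul0r.
under eq_bigr do rewrite mulrDl -!mulrA.
by rewrite big_split -!mulr_sumr !sum_delta.
Qed.

Lemma fm_coordinate_lift (g d : T -> R) :
  (forall s, fm_comb s g <= fm_comb s d) ->
  exists x1, forall t, alpha t * x1 + g t <= d t.
Proof.
move=> comb_le.
(* [u t] is an upper bound on [x1] if [alpha t > 0] and a lower bound if
   [alpha t < 0]; the pair combinations say lower bounds are below upper ones. *)
pose u t := (d t - g t) / alpha t.
have alpha_u t : alpha t != 0 -> alpha t * u t = d t - g t.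
  by move=> at0; rewrite mulrC divfK.
have u_sep i j : 0 < alpha i -> alpha j < 0 -> u j <= u i.
  move=> ai aj; have := comb_le (inr (i, j)); rewrite /= ai aj /= => comb_ij.
  have aij : 0 < alpha i * - alpha j by rewrite mulr_gt0 ?oppr_gt0.
  rewrite -(ler_pM2l aij).
  have -> : alpha i * - alpha j * u j = - alpha i * (alpha j * u j) by ring.
  have -> : alpha i * - alpha j * u i = - alpha j * (alpha i * u i) by ring.
  by rewrite alpha_u ?ltr0_neq0 // alpha_u ?lt0r_neq0 //; lra.
pose m0 := \big[Order.min/0]_(i | 0 < alpha i) u i.
pose x1 := \big[Order.max/m0]_(j | alpha j < 0) u j.
exists x1 => t; case: (ltrgtP (alpha t) 0) => [at_neg|at_pos|at0].
- have : alpha t * x1 <= alpha t * u t.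
    by apply: ler_wnM2l; [exact: ltW | exact: le_bigmax_cond].
  by rewrite alpha_u ?ltr0_neq0 //; lra.
- have : alpha t * x1 <= alpha t * u t.
    apply: ler_wpM2l; first exact: ltW.
    apply/bigmax_leP; split.
      exact: bigmin_le_cond.
    by move=> j aj; exact: u_sep.
  by rewrite alpha_u ?lt0r_neq0 //; lra.
- by have := comb_le (inl t); rewrite /= at0 eqxx mul0r add0r.
Qed.

End FourierMotzkin.

Definition infeasibility_certificate (T : finType) n (a : T -> 'rV[R]_n) (d : T -> R)
    (y : T -> R) :=
  [/\ forall t, 0 <= y t, \sum_t y t *: a t = 0 & \sum_t y t * d t < 0].

Section Elimination.
Variables (T : finType) (n : nat) (a : T -> 'rV[R]_(1 + n)) (d : T -> R).

Let alpha t := lsubmx (a t) 0 0.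
Let w := fm_weight alpha.

Definition fm_rows s := \sum_t w s t *: rsubmx (a t).
Definition fm_rhs s := \sum_t w s t * d t.

Lemma fm_solution_lift :
  (exists x' : 'cV_n, forall s, (fm_rows s *m x') 0 0 <= fm_rhs s) ->
  exists x : 'cV_(1 + n), forall t, (a t *m x) 0 0 <= d t.
Proof.
case=> x' feas; have [x1 lift] : exists x1,
    forall t, alpha t * x1 + (rsubmx (a t) *m x') 0 0 <= d t.
  apply: fm_coordinate_lift => s; rewrite -!sum_fm_weight.
  have := feas s; rewrite mulmx_suml summxE.
  by under eq_bigr do rewrite -scalemxAl mxE.
exists (col_mx x1%:M x') => t.
rewrite -[a t]hsubmxK mul_row_col mul_mx_scalar mxE [X in X + _]mxE mulrC.
exact: lift.
Qed.

Lemma fm_certificate_lift y' : infeasibility_certificate fm_rows fm_rhs y' ->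
  infeasibility_certificate a d (fun t => \sum_s y' s * w s t).
Proof.
case=> y'_ge0 y'_rows y'_rhs; split.
- by move=> t; apply: sumr_ge0 => s _; rewrite mulr_ge0 ?fm_weight_ge0.
- have -> : \sum_t (\sum_s y' s * w s t) *: a t = \sum_s y' s *: \sum_t w s t *: a t.
    under eq_bigr do rewrite scaler_suml.
    rewrite exchange_big; apply: eq_bigr => s _.
    by rewrite scaler_sumr; apply: eq_bigr => t _; rewrite scalerA.
  apply/eqP; rewrite -[\sum_s _]hsubmxK row_mx_eq0 !linear_sum /=.
  rewrite big1 => [|s _]; last first.
    apply/rowP => j; rewrite ord1 !linearZ /= linear_sum !mxE summxE.
    under eq_bigr do rewrite linearZ mxE.
    by rewrite sum_fm_weight fm_comb_alpha mulr0.
  rewrite eqxx -[X in _ == X]y'_rows; apply/eqP/eq_bigr => s _.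
  by rewrite linearZ /= linear_sum; congr (_ *: _); apply: eq_bigr => t _; rewrite linearZ.
- rewrite (eq_bigr (fun t => \sum_s y' s * (w s t * d t))); last first.
    by move=> t _; rewrite mulr_suml; apply: eq_bigr => s _; rewrite mulrA.
  by rewrite exchange_big; under eq_bigr do rewrite -mulr_sumr.
Qed.

End Elimination.

Theorem farkas_affine (T : finType) n (a : T -> 'rV[R]_n) (d : T -> R) :
  (exists x : 'cV_n, forall t, (a t *m x) 0 0 <= d t) \/
  (exists y, infeasibility_certificate a d y).
Proof.
elim: n T a d => [|n IHn] T a d.
  have [t0 /= d_neg|d_ge0] := pickP (fun t => d t < 0).
    right; exists (fun t => (t0 == t)%:R); split; rewrite ?sum_delta //.
    by rewrite big1 // => t _; rewrite (thinmx0 (a t)) scaler0.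
  by left; exists 0 => t; rewrite mulmx0 mxE leNgt d_ge0.
have [feas|[y' cert]] := IHn _ (fm_rows a) (fm_rhs a d).
  by left; exact: fm_solution_lift.
by right; eexists; exact: fm_certificate_lift cert.
Qed.

Theorem farkas (T : finType) n (a : T -> 'rV[R]_n) (v : 'rV[R]_n) :
  (exists x : 'cV_n, (forall t, (a t *m x) 0 0 <= 0) /\ 0 < (v *m x) 0 0) \/
  (exists y : T -> R, (forall t, 0 <= y t) /\ \sum_t y t *: a t = v).
Proof.
pose a' (s : T + 'I_1) := if s is inl t then a t else - v.
pose d' (s : T + 'I_1) : R := if s is inl _ then 0 else -1.
have [[x feas]|[y [y_ge0]]] := farkas_affine a' d'.
  left; exists x; split=> [t|]; first exact: (feas (inl t)).
  by have := feas (inr ord0); rewrite /= mulNmx mxE lerNl opprK; apply: lt_le_trans.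
rewrite !big_sumType !big_ord1 /= => y_a.
rewrite big1 ?add0r => [y_d|t _]; last exact: mulr0.
have y0_gt0 : 0 < y (inr ord0) by rewrite -oppr_lt0 -mulrN1.
right; exists (fun t => y (inl t) / y (inr ord0)); split=> [t|].
  by rewrite divr_ge0 ?y_ge0 ?ltW.
under eq_bigr do rewrite mulrC -scalerA.
rewrite -scaler_sumr; apply: (canLR (scalerK (lt0r_neq0 y0_gt0))).
by apply/eqP; rewrite -subr_eq0 -scalerN; apply/eqP.
Qed.

Corollary farkas_mixed p k n (A : 'M[R]_(p, n)) (U : 'M[R]_(k, n)) (v : 'rV[R]_n) :
  (exists x : 'cV_n,
     [/\ forall i, (A *m x) i 0 <= 0, U *m x = 0 & 0 < (v *m x) 0 0]) \/
  (exists (y : 'rV_p) (z : 'rV_k), (forall i, 0 <= y 0 i) /\ v = y *m A + z *m U).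
Proof.
pose a (s : 'I_p + ('I_k + 'I_k)) :=
  match s with inl i => row i A | inr (inl r) => row r U | inr (inr r) => - row r U end.
have [[x [feas vx]]|[y [y_ge0 y_a]]] := farkas a v.
  left; exists x; split=> // [i|].
    by have := feas (inl i); rewrite /= -row_mul mxE.
  apply/colP => r; apply/eqP; rewrite mxE eq_le.
  have := feas (inr (inl r)); have := feas (inr (inr r)).
  by rewrite /= mulNmx -row_mul !mxE oppr_le0 => -> ->.
right; exists (\row_i y (inl i)), (\row_r (y (inr (inl r)) - y (inr (inr r)))).
split=> [i|]; first by rewrite mxE.
rewrite -y_a !big_sumType /= !mulmx_sum_row.
congr (_ + _); first by apply: eq_bigr => i _; rewrite mxE.
by rewrite -big_split; apply: eq_bigr => r _; rewrite mxE scalerBl scalerN.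
Qed.

End Farkas.

Lemma mdeg_le2P k (m : 'X_{1..k}) : (mdeg m <= 2)%N ->
  [\/ m = 0%MM, exists a, m = U_(a)%MM | exists a b, m = (U_(a) + U_(b))%MM].
Proof.
rewrite leq_eqVlt ltnS leq_eqVlt ltnS leqn0 mdeg_eq0.
case/or3P => [deg2|/mdeg1P [a /eqP ->]|/eqP ->];
  [|by constructor 2; exists a|by constructor 1].
have [a ma] : exists a, (0 < m a)%N.
  apply/existsP; apply: contraTT deg2; rewrite negb_exists => /forallP m0.
  by rewrite mdegE big1 // => i _; apply/eqP; rewrite -leqn0 leqNgt m0.
have Ua_le : (U_(a) <= m)%MM.
  by apply/mnm_lepP => i; rewrite mnm1E; case: eqP => // <-.
have /eqP/mdeg1P [b /eqP mb] : mdeg (m - U_(a))%MM = 1%N.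
  by move: deg2; rewrite -{1}(submK Ua_le) mdegD mdeg1 addn1 => /eqP [].
by constructor 3; exists a, b; rewrite -mb addmC submK.
Qed.

Section Taylor.
Variables (R : realType) (k : nat).
Implicit Types (p : {mpoly rat[k]}) (x : 'cV[R]_k).

Lemma pevalD p p' x : peval (p + p') x = peval p x + peval p' x.
Proof. by rewrite /peval raddfD /= mevalD. Qed.

Lemma pevalZ c p x : peval (c *: p) x = ratr c * peval p x.
Proof. by rewrite /peval map_mpolyZ mevalZ. Qed.

Lemma pevalM p p' x : peval (p * p') x = peval p x * peval p' x.
Proof. by rewrite /peval rmorphM /= mevalM. Qed.

Lemma pevalC c x : peval c%:MP x = ratr c.
Proof. by rewrite /peval map_mpolyC mevalC. Qed.

Lemma pevalX i x : peval 'X_i x = x i 0.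
Proof. by rewrite /peval map_mpolyX mevalXU. Qed.

Lemma peval0 x : peval 0 x = 0.
Proof. by rewrite -mpolyC0 pevalC rmorph0. Qed.

Lemma mderivXU (a i : 'I_k) : ('X_a : {mpoly rat[k]})^`M(i) = ((a == i)%:R)%:MP.
Proof.
rewrite mderivX mnm1E; case: eqP => [<-|_]; last by rewrite scale0r mpolyC0.
by rewrite -[X in (X - _)%MM]add0m addmK mpolyX0 scale1r mpolyC1.
Qed.

Definition taylor2 p x : R :=
  peval p 0 + \sum_i peval (p^`M(i)) 0 * x i 0 +
  2^-1 * \sum_i \sum_j peval (p^`M(i)^`M(j)) 0 * (x i 0 * x j 0).

Lemma taylor2D p p' x : taylor2 (p + p') x = taylor2 p x + taylor2 p' x.
Proof.
rewrite /taylor2 pevalD.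
under eq_bigr do rewrite mderivD pevalD mulrDl.
under [X in _ + 2^-1 * X]eq_bigr do under eq_bigr do rewrite !mderivD pevalD mulrDl.
rewrite big_split /=.
under [X in _ + 2^-1 * X]eq_bigr do rewrite big_split /=.
rewrite big_split /=; ring.
Qed.

Lemma taylor2Z c p x : taylor2 (c *: p) x = ratr c * taylor2 p x.
Proof.
rewrite /taylor2 pevalZ.
under eq_bigr do rewrite mderivZ pevalZ -mulrA.
under [X in _ + 2^-1 * X]eq_bigr do under eq_bigr do rewrite !mderivZ pevalZ -mulrA.
rewrite -mulr_sumr.
under [X in _ + 2^-1 * X]eq_bigr do rewrite -mulr_sumr.
rewrite -mulr_sumr; ring.
Qed.

Lemma taylor2C c x : taylor2 c%:MP x = ratr c.
Proof.
rewrite /taylor2 pevalC big1 => [|i _]; last by rewrite mderivC peval0 mul0r.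
rewrite big1 => [|i _]; first by rewrite mulr0 !addr0.
by rewrite big1 // => j _; rewrite !mderivC peval0 mul0r.
Qed.

Lemma taylor2X a x : taylor2 'X_a x = x a 0.
Proof.
rewrite /taylor2 pevalX mxE add0r.
under eq_bigr do rewrite mderivXU pevalC rmorph_nat.
under [X in _ + 2^-1 * X]eq_bigr do
  under eq_bigr do rewrite mderivXU mderivC peval0 mul0r.
by rewrite sum_delta big1 ?mulr0 ?addr0 // => i _; rewrite big1.
Qed.

Lemma taylor2XX a b x : taylor2 ('X_a * 'X_b) x = x a 0 * x b 0.
Proof.
have dXX i : ('X_a * 'X_b : {mpoly rat[k]})^`M(i) =
    ((a == i)%:R)%:MP * 'X_b + 'X_a * ((b == i)%:R)%:MP.
  by rewrite mderivM !mderivXU.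
rewrite /taylor2 pevalM !pevalX !mxE mul0r add0r.
under eq_bigr do rewrite dXX pevalD !pevalM !pevalX !mxE !mulr0 !mul0r addr0 mul0r.
under [X in _ + 2^-1 * X]eq_bigr do under eq_bigr do
  rewrite dXX mderivD !mderivM !mderivC !mderivXU !mul0r !mulr0 add0r addr0
    pevalD !pevalM !pevalC !rmorph_nat mulrDl -!mulrA [X in _ + X]mulrCA.
under [X in _ + 2^-1 * X]eq_bigr do rewrite big_split /= -!mulr_sumr !sum_delta.
by rewrite big1 // add0r big_split /= !sum_delta; field.
Qed.

Lemma peval_taylor2_monomial (m : 'X_{1..k}) x :
  (mdeg m <= 2)%N -> peval 'X_[m] x = taylor2 'X_[m] x.
Proof.
case/mdeg_le2P => [->|[a ->]|[a [b ->]]].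
- by rewrite mpolyX0 -mpolyC1 pevalC taylor2C.
- by rewrite pevalX taylor2X.
- by rewrite mpolyXD pevalM !pevalX taylor2XX.
Qed.

Lemma peval_taylor2 p x : (msize p <= 3)%N -> peval p x = taylor2 p x.
Proof.
move=> size_p; rewrite (mpolyE p).
have : {in msupp p, forall m, mdeg m <= 2}%N.
  by move=> m /msize_mdeg_lt/leq_trans/(_ size_p).
elim: (msupp p) => [_|m s IHs deg_ms].
  by rewrite big_nil -mpolyC0 pevalC taylor2C.
rewrite big_cons pevalD taylor2D pevalZ taylor2Z peval_taylor2_monomial ?IHs //.
  by move=> m' ms'; apply: deg_ms; rewrite in_cons ms' orbT.
by apply: deg_ms; rewrite mem_head.
Qed.

End Taylor.

Lemma quad_form_sum (R : comPzRingType) k (H : 'M[R]_k) (u : 'cV[R]_k) :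
  (u^T *m H *m u) 0 0 = \sum_i \sum_j H i j * (u i 0 * u j 0).
Proof.
rewrite mxE; under eq_bigr do rewrite mxE big_distrl /=.
rewrite exchange_big; apply: eq_bigr => i _; apply: eq_bigr => j _.
by rewrite !mxE mulrCA mulrA.
Qed.

Section PositiveDefinite.
Variables (R : realFieldType) (k : nat) (H : 'M[R]_k).
Hypothesis H_posdef : forall y : 'cV[R]_k, y != 0 -> 0 < (y^T *m H *m y) 0 0.

Lemma posdef_unitmx : H \in unitmx.
Proof.
rewrite -row_free_unit -kermx_eq0; apply/eqP/row_matrixP => i; rewrite row0.
have kerH : row i (kermx H) *m H = 0 by rewrite -row_mul mulmx_ker row0.
apply/eqP; apply: contraT => ker_i.
have /H_posdef : (row i (kermx H))^T != 0 by rewrite trmx_eq0.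
by rewrite trmxK kerH mul0mx mxE ltxx.
Qed.

Lemma posdef_quadratic_bounded_below (h : 'cV[R]_k) : H^T = H ->
  exists C, forall u : 'cV[R]_k, C <= (h^T *m u) 0 0 + 2^-1 * (u^T *m H *m u) 0 0.
Proof.
move=> H_sym; have H_unit := posdef_unitmx.
(* Complete the square around the minimiser [- invmx H *m h]. *)
exists (- 2^-1 * (h^T *m invmx H *m h) 0 0) => u.
pose v := u + invmx H *m h.
have vHv : v^T *m H *m v = u^T *m H *m u + u^T *m h + h^T *m u + h^T *m invmx H *m h.
  rewrite /v [(u + _)^T]linearD /= trmx_mul trmx_inv H_sym !mulmxDl !mulmxDr -!mulmxA.
  rewrite !mulKVmx // !mulKmx // !addrA; congr (_ + _); rewrite -!addrA; congr (_ + _).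
have hu : (u^T *m h) 0 0 = (h^T *m u) 0 0.
  by rewrite !mxE; apply: eq_bigr => i _; rewrite !mxE mulrC.
have : 0 <= (v^T *m H *m v) 0 0.
  by have [->|/H_posdef/ltW//] := eqVneq v 0; rewrite mulmx0 mxE.
by rewrite vHv ![(_ + _ : 'M_1) 0 0]mxE hu; lra.
Qed.

End PositiveDefinite.

Lemma quadratic_sub_linear_bounded_below (R : realType) k (q : {mpoly rat[k]}) :
  strongly_convex_quadratic R q -> forall z : 'rV[R]_k,
  exists C, forall u : 'cV[R]_k, C <= peval q u - (z *m u) 0 0.
Proof.
move=> [size_q q_posdef] z.
pose H := hessian q (0 : 'cV[R]_k).
have H_sym : H^T = H by apply/matrixP => i j; rewrite !mxE mderiv_comm.
pose g : 'cV[R]_k := \col_i (peval (q^`M(i)) 0).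
have [C HC] := posdef_quadratic_bounded_below (q_posdef 0) (g - z^T) H_sym.
exists (peval q 0 + C) => u; rewrite (peval_taylor2 u size_q) /taylor2.
have lin : ((g - z^T)^T *m u) 0 0 = \sum_i peval (q^`M(i)) 0 * u i 0 - (z *m u) 0 0.
  rewrite linearB /= trmxK mulmxBl [LHS]mxE [(- _ : 'M_1) 0 0]mxE; congr (_ - _).
  by rewrite mxE; apply: eq_bigr => i _; rewrite !mxE.
have quad : (u^T *m H *m u) 0 0 = \sum_i \sum_j peval (q^`M(i)^`M(j)) 0 * (u i 0 * u j 0).
  by rewrite quad_form_sum; apply: eq_bigr => i _; apply: eq_bigr => j _; rewrite mxE.
by have := HC u; rewrite lin quad; lra.
Qed.

Lemma mul_tr_row_eq0 (R : realDomainType) n (v : 'rV[R]_n) : v *m v^T = 0 -> v = 0.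
Proof.
move/(congr1 (fun M : 'M_1 => M 0 0)); rewrite !mxE.
under eq_bigr do rewrite mxE.
move=> sum_sq0.
apply/rowP => j; rewrite mxE; apply/eqP; rewrite -[_ == 0]orbb -mulf_eq0.
have sq_ge0 l : true -> 0 <= v 0 l * v 0 l by rewrite -expr2 sqr_ge0.
by rewrite (psumr_eq0P sq_ge0 sum_sq0).
Qed.

Lemma capmx_genmx_kermx_tr (R : realFieldType) k n (B : 'M[R]_(k, n)) :
  (<<B>> :&: kermx B^T)%MS = 0.
Proof.
apply/eqP/rowV0P => v; rewrite sub_capmx genmxE.
case/andP => /submxP [u ->] /sub_kermxP uBBt.
by apply: mul_tr_row_eq0; rewrite trmx_mul mulmxA uBBt mul0mx.
Qed.

Section OrthogonalProjection.
Variables (R : realType) (k n : nat) (B : 'M[R]_(k, n)).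

Lemma orth_projD x y : orth_proj B (x + y) = orth_proj B x + orth_proj B y.
Proof. by rewrite /orth_proj !linearD /= mulmxDl linearD. Qed.

Lemma orth_projZ t x : orth_proj B (t *: x) = t *: orth_proj B x.
Proof. by rewrite /orth_proj !linearZ /= -scalemxAl linearZ. Qed.

Lemma orth_proj_ker x : B *m x = 0 -> orth_proj B x = 0.
Proof.
move=> Bx0; rewrite /orth_proj proj_mx_0 ?trmx0 ?capmx_genmx_kermx_tr //.
by apply/sub_kermxP; rewrite -trmx_mul Bx0 trmx0.
Qed.

End OrthogonalProjection.

Lemma dotvE (R : realType) n (u v : 'cV[R]_n) : dotv u v = (u^T *m v) 0 0.
Proof. by rewrite mxE; apply: eq_bigr => i _; rewrite mxE. Qed.

Lemma lin_comb_mulmx_le (R : realFieldType) p k n (A : 'M[R]_(p, n))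
    (U : 'M[R]_(k, n)) (b : 'cV[R]_p) (y : 'rV[R]_p) (z : 'rV[R]_k) (x : 'cV[R]_n) :
  (forall i, 0 <= y 0 i) -> (forall i, (A *m x) i 0 <= b i 0) ->
  ((y *m A + z *m U) *m x) 0 0 <= (y *m b) 0 0 + (z *m (U *m x)) 0 0.
Proof.
move=> y_ge0 Ax_le; rewrite mulmxDl -!mulmxA [(_ + _ : 'M_1) 0 0]mxE lerD2r !mxE.
by apply: ler_sum => i _; rewrite ler_wpM2l.
Qed.

Section Unboundedness.
Variables (R : realType) (n m k : nat) (f : {mpoly rat[n]}) (A : 'M[R]_(m, n))
  (b : 'cV[R]_m) (U : 'M[R]_(k, n)) (w : 'cV[R]_n).
Hypothesis f_split : forall x, peval f x = peval f (orth_proj U x) - dotv w x.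

Lemma peval_shift_ker x v t :
  U *m v = 0 -> dotv w v = 1 -> peval f (x + t *: v) = peval f x - t.
Proof.
move=> Uv wv; rewrite [LHS]f_split [in RHS]f_split.
rewrite orth_projD orth_projZ (orth_proj_ker Uv) scaler0 addr0 !dotvE.
rewrite mulmxDr -scalemxAr [(_ + _ : 'M_1) 0 0]mxE [(_ *: _ : 'M_1) 0 0]mxE.
by rewrite -(dotvE w v) wv; ring.
Qed.

Lemma peval_unbounded_along_ray x v :
  lev (A *m x) b -> lev (A *m v) 0 -> U *m v = 0 -> dotv w v = 1 ->
  forall M, exists y, lev (A *m y) b /\ peval f y < M.
Proof.
move=> x_in Av Uv wv M; pose t := `|peval f x - M| + 1.
have t_ge0 : 0 <= t by rewrite addr_ge0.
exists (x + t *: v); split.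
  move=> i; rewrite mulmxDr -scalemxAr !mxE.
  by have := Av i; have := x_in i; rewrite !mxE; nra.
rewrite peval_shift_ker //.
by have := ler_norm (peval f x - M); rewrite /t; lra.
Qed.

Lemma peval_bounded_below (q : {mpoly rat[k]}) (y : 'rV[R]_m) (z : 'rV[R]_k) :
  strongly_convex_quadratic R q ->
  (forall x, peval f (orth_proj U x) >= peval q (U *m x)) ->
  (forall i, 0 <= y 0 i) -> w^T = y *m A + z *m U ->
  exists C, forall x, lev (A *m x) b -> C <= peval f x.
Proof.
move=> q_scq f_ge_q y_ge0 w_comb.
have [C C_le] := quadratic_sub_linear_bounded_below q_scq z.
exists (C - (y *m b) 0 0) => x x_in.
have := lin_comb_mulmx_le U z y_ge0 x_in.
have := C_le (U *m x); have := f_ge_q x; have := f_split x.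
by rewrite dotvE w_comb; lra.
Qed.

End Unboundedness.

Theorem lemma5p1 (R : realType) (n m k : nat)
    (f : {mpoly rat[n]}) (A : 'M[rat]_(m, n)) (b : 'cV[rat]_m)
    (U : 'M[rat]_(k, n)) (w : 'cV[rat]_n) (q : {mpoly rat[k]}) :
  convex_poly R f ->
  (exists x : 'cV[R]_n, lev (ratmx R A *m x) (ratmx R b)) ->
  (* rows of U pairwise orthogonal; they span the subspace U := rowspan U *)
  (forall i j : 'I_k, i != j -> \sum_(l < n) U i l * U j l = 0) ->
  (* w lies in the orthogonal complement of the row space of U *)
  U *m w = 0 ->
  strongly_convex_quadratic R q ->
  (forall x : 'cV[R]_n,
      peval f x = peval f (orth_proj (ratmx R U) x) - dotv (ratmx R w) x) ->
  (forall x : 'cV[R]_n,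
      peval f (orth_proj (ratmx R U) x) >= peval q (ratmx R U *m x)) ->
  ((forall M : R, exists x : 'cV[R]_n,
        lev (ratmx R A *m x) (ratmx R b) /\ peval f x < M) <->
   (exists x0 : 'cV[R]_n,
        lev (ratmx R A *m x0) 0 /\ ratmx R U *m x0 = 0 /\ dotv (ratmx R w) x0 = 1)).
Proof.
move=> _ [xP xP_in] _ _ q_scq f_split f_ge_q.
split=> [f_unbounded|[x0 [Ax0 [Ux0 wx0]]]]; last first.
  exact: (peval_unbounded_along_ray f_split xP_in Ax0 Ux0 wx0).
have [[x0 [Ax0 Ux0 wx0]]|[y [z [y_ge0 w_comb]]]] :=
  farkas_mixed (ratmx R A) (ratmx R U) (ratmx R w)^T.
  have w_x0 : 0 < dotv (ratmx R w) x0 by rewrite dotvE.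
  exists ((dotv (ratmx R w) x0)^-1 *: x0); split; [|split].
  - move=> i; have := Ax0 i; rewrite -scalemxAr !mxE => Ax0_i.
    by rewrite mulr_ge0_le0 // invr_ge0 ltW.
  - by rewrite -scalemxAr Ux0 scaler0.
  - by rewrite dotvE -scalemxAr mxE -dotvE mulVf ?gt_eqF.
have [C C_le] := peval_bounded_below (ratmx R b) f_split q_scq f_ge_q y_ge0 w_comb.
have [x [x_in fx_lt]] := f_unbounded C.
by have := C_le x x_in; rewrite leNgt fx_lt.
Qed.
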